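(* Let $(\mathcal M,X,\bot)$ be a concurrent system, $a$ a letter, and $x$ an $a$-rooted linking execution from some state $\alpha$. Let $\mathcal M^a=\langle\Sigma\setminus\{a\}\rangle$, and fix integers $p,q\ge0$ and a state $\beta$. Then the map $\varphi:\mathcal M_{\beta,\alpha}(p)\times\mathcal M^a_{\alpha\cdot x}(q)\to\mathcal M_\beta$, $\varphi(u,v)=uxv$, is injective.
   Context: A trace monoid $\mathcal M=\mathcal M(\Sigma,I)$ is $\langle\Sigma\mid ab=ba\ ((a,b)\in I)\rangle$, $\Sigma$ finite, $I$ irreflexive symmetric; $|x|$ is length; $D=(\Sigma\times\Sigma)\setminus I$. A concurrent system $(\mathcal M,X,\bot)$: $X$ finite, $\bot\notin X$, right action of $\mathcal M$ on $X\cup\{\bot\}$ with $\bot\cdot x=\bot$. Notation: $\mathcal M_\beta=\{x:\beta\cdot x\ne\bot\}$, $\mathcal M_{\beta,\alpha}(p)=\{u:|u|=p,\ \beta\cdot u=\alpha\}$, $\mathcal M^a_{\gamma}(q)=\{v\in\mathcal M^a:|v|=q,\ \gamma\cdot v\ne\bot\}$. A linking sequence from $\alpha$ is a sequence of letters $a_1,\dots,a_p$ such that for some indices $1\le j_1<\dots<j_q\le p$: $\alpha\cdot(a_1\cdots a_p)\ne\bot$; $(a_{j_k},a_{j_{k+1}})\in D$ for all $k<q$; every letter of $\Sigma$ occurs among $a_{j_1},\dots,a_{j_q}$. It is $a$-rooted if the indices can be chosen with $a_{j_1}=a$. An $a$-rooted linking execution from $\alpha$ is the image in $\mathcal M$ of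 an $a$-rooted linking sequence from $\alpha$. *)

From mathcomp Require Import all_boot.
Set Implicit Arguments. Unset Strict Implicit. Unset Printing Implicit Defensive.

(* Trace monoid M(Sigma, I): words over Sigma modulo the congruence generated
   by ab = ba for (a,b) in I.  A trace is represented by any of its words;
   equality of traces is [trace_eq I]. *)
Section Traces.
Variable Sigma : finType.
Variable I : rel Sigma.

Inductive trace_eq : seq Sigma -> seq Sigma -> Prop :=
| teq_refl w : trace_eq w w
| teq_swap u v a b : I a b -> trace_eq (u ++ [:: a; b] ++ v) (u ++ [:: b; a] ++ v)
| teq_sym w1 w2 : trace_eq w1 w2 -> trace_eq w2 w1
| teq_trans w1 w2 w3 : trace_eq w1 w2 -> trace_eq w2 w3 -> trace_eq w1 w3.

Definition dep : rel Sigma := fun c d => ~~ I c d.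

(* Concurrent system: states X, sink bot = None.  The right action of M on
   X u {bot} is given by its action on letters, [act : X -> Sigma -> option X]
   (with bot . a = bot built in), extended to words; it is an action of the
   trace monoid iff the commutation condition [act_compat] holds. *)
Variable X : finType.
Variable act : X -> Sigma -> option X.

Definition actw (o : option X) (w : seq Sigma) : option X :=
  foldl (fun o c => obind (fun s => act s c) o) o w.

Definition act_compat : Prop :=
  forall (s : X) (a b : Sigma), I a b -> actw (Some s) [:: a; b] = actw (Some s) [:: b; a].

(* a-rooted linking sequence from alpha: alpha . w <> bot, and a subsequence
   a_{j_1} ... a_{j_q} of w (given as [a :: t]) with a_{j_1} = a, consecutive
   letters dependent, and containing every letter of Sigma. *)
Definition rooted_linking_seq (a : Sigma) (alpha : X) (w : seq Sigma) : Prop :=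
  actw (Some alpha) w != None /\
  exists t : seq Sigma,
    [/\ subseq (a :: t) w, path dep a t & forall c : Sigma, c \in a :: t].

Definition rooted_linking_exec (a : Sigma) (alpha : X) (x : seq Sigma) : Prop :=
  exists w, trace_eq w x /\ rooted_linking_seq a alpha w.

End Traces.

From mathcomp Require Import all_boot.
Set Implicit Arguments. Unset Strict Implicit. Unset Printing Implicit Defensive.

(* By the projection lemma, two words represent the same trace iff their
   projections onto every pair of dependent letters agree.  Project u x v = u' x v' onto a dependent pair (b, b') with b occurring
   in x: if u and u' contain b equally often, the first b contributed by x lies
   at the same position on both sides, so the projections of u and u' agree and
   u, u' contain b' equally often too.  Since a does not occur in v, v', this
   count equality holds for a, and the dependence path of the linking sequence,
   which visits every letter, spreads it to all letters: u and u' are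
   permutations of each other.  Then the projections of u and u' have equal
   lengths and cancel from both sides, leaving equal projections of u, u' and
   of v, v'. *)

Lemma cat_prefix_eq_count (T : eqType) (c : T) (A A' X B B' : seq T) :
  c \in X -> count_mem c A = count_mem c A' ->
  A ++ X ++ B = A' ++ X ++ B' -> A = A'.
Proof.
move=> cX.
have c_free_nil s t t' : count_mem c s = 0 -> X ++ t = s ++ X ++ t' -> s = [::].
  move=> /count_memPn cNs /(congr1 (index c)) /eqP.
  rewrite !index_cat cX (negbTE cNs) -{1}[index c X]add0n eqn_add2r eq_sym.
  by rewrite size_eq0 => /eqP.
elim: A A' => [|y A IH] [|y' A'] //.
- by move=> /esym c_A' /(c_free_nil _ _ _ c_A').
- by move=> c_A /esym /(c_free_nil _ _ _ c_A).
- move=> /= /eqP c_AA' [yy' AXB]; rewrite yy' eqn_add2l in c_AA'.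
  by rewrite yy' (IH _ (eqP c_AA') AXB).
Qed.

Lemma path_all_closed (T : Type) (e : rel T) (P : pred T) (b : T) (t : seq T) :
  (forall c d, e c d -> P c -> P d) -> path e b t -> P b -> all P (b :: t).
Proof.
move=> closedP; elim: t b => [|d t IH] b /=; first by rewrite andbT.
by move=> /andP[ebd edt] Pb; rewrite Pb; exact: IH edt (closedP b d ebd Pb).
Qed.

Section Projections.
Variable Sigma : finType.
Variable I : rel Sigma.
Hypothesis I_irr : irreflexive I.
Hypothesis I_sym : symmetric I.

Definition proj2 (c d : Sigma) : seq Sigma -> seq Sigma := filter (pred2 c d).

Lemma dep_refl (c : Sigma) : dep I c c.
Proof. by rewrite /dep I_irr. Qed.

Lemma count_mem_proj2 (c d z : Sigma) (s : seq Sigma) :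
  pred2 c d z -> count_mem z (proj2 c d s) = count_mem z s.
Proof.
move=> cdz; rewrite count_filter; apply: eq_count => y /=.
by case: (eqVneq y z) => [->|]; rewrite ?cdz ?andbF.
Qed.

Lemma trace_eq_perm (s t : seq Sigma) : trace_eq I s t -> perm_eq s t.
Proof.
elim=> [w|u v a b _|w1 w2 _|w1 w2 w3 _ IH12 _ IH23].
- exact: perm_refl.
- by rewrite perm_cat2l perm_cat2r; apply/permP => P /=; rewrite addnCA.
- by rewrite perm_sym.
- exact: perm_trans IH23.
Qed.

Lemma trace_eq_cons (c : Sigma) (s t : seq Sigma) :
  trace_eq I s t -> trace_eq I (c :: s) (c :: t).
Proof.
elim=> [w|u v a b Iab|w1 w2 _|w1 w2 w3 _ IH12 _ IH23].
- exact: teq_refl.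
- exact: (teq_swap (c :: u) v Iab).
- exact: teq_sym.
- exact: teq_trans IH23.
Qed.

Lemma trace_eq_proj2 (s t : seq Sigma) (c d : Sigma) :
  trace_eq I s t -> dep I c d -> proj2 c d s = proj2 c d t.
Proof.
move=> st; elim: st c d => [w|u v a b Iab|w1 w2 _ IH|w1 w2 w3 _ IH12 _ IH23] c d cd //.
- rewrite /proj2 !filter_cat; congr (_ ++ (_ ++ _)) => /=.
  case: ifP => ca; case: ifP => cb //; move: cd Iab; rewrite /dep.
  by case/pred2P: ca => ->; case/pred2P: cb => ->; rewrite ?I_irr // I_sym => /negbTE ->.
- by rewrite IH.
- by rewrite IH12 // IH23.
Qed.

Lemma trace_eq_commute_front (c : Sigma) (t1 t2 : seq Sigma) :
  {in t1, forall d, I d c} -> trace_eq I (t1 ++ c :: t2) (c :: t1 ++ t2).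
Proof.
elim: t1 => [_|d t1 IH] /=; first exact: teq_refl.
move=> Idc; apply: (teq_trans (trace_eq_cons d (IH _))).
  by move=> e e_t1; apply: Idc; rewrite inE e_t1 orbT.
exact: (teq_swap [::] _ (Idc d (mem_head d t1))).
Qed.

Lemma proj2_trace_eq (s t : seq Sigma) :
  (forall c d, dep I c d -> proj2 c d s = proj2 c d t) -> trace_eq I s t.
Proof.
elim: s t => [|c s IH] t proj_st.
  case: t proj_st => [|z t] proj_st; first exact: teq_refl.
  by have := proj_st z z (dep_refl z); rewrite /proj2 /= eqxx.
have c_t : c \in t.
  have := proj_st c c (dep_refl c); rewrite /proj2 /= eqxx /= => proj_t.
  by have := mem_head c (filter (pred2 c c) s); rewrite proj_t mem_filter => /andP[].
set t1 := take (index c t) t; set t2 := drop (index c t).+1 t.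
have t_split : t = t1 ++ c :: t2 by rewrite -drop_index ?cat_take_drop.
have cNt1 : c \notin t1 by rewrite in_take // ltnn.
(* a letter of t1 dependent on c would precede the first c in proj2 c d t *)
have Idc : {in t1, forall d, I d c}.
  move=> d d_t1; apply/negPn/negP => dep_dc.
  have := congr1 (index c) (proj_st c d _); rewrite /dep I_sym => /(_ dep_dc).
  rewrite t_split /proj2 filter_cat index_cat mem_filter (negbTE cNt1) andbF /=.
  rewrite !eqxx /= !(eq_refl c) addn0 => /esym/eqP; rewrite size_eq0 => /eqP t1_proj.
  by have := mem_filter (pred2 c d) d t1; rewrite t1_proj d_t1 /= eqxx orbT.
have t_front := trace_eq_commute_front t2 Idc.
rewrite t_split; apply: teq_trans (teq_sym t_front); apply/trace_eq_cons/IH.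
move=> c' d' cd'; have := proj_st c' d' cd'.
by rewrite t_split (trace_eq_proj2 t_front cd') /proj2 /=; case: ifP => // _ [].
Qed.

Lemma count_eq_along_dep (b b' : Sigma) (u u' x v v' : seq Sigma) :
  trace_eq I (u ++ x ++ v) (u' ++ x ++ v') -> dep I b b' -> b \in x ->
  count_mem b u = count_mem b u' -> count_mem b' u = count_mem b' u'.
Proof.
move=> uxv bb' b_x b_uu'.
have proj_uxv := trace_eq_proj2 uxv bb'; rewrite /proj2 !filter_cat in proj_uxv.
have bb'_b : pred2 b b' b by apply/pred2P; left.
have bb'_b' : pred2 b b' b' by apply/pred2P; right.
have proj_uu' : proj2 b b' u = proj2 b b' u'.
  apply: (cat_prefix_eq_count (c := b)) proj_uxv.
  - by rewrite mem_filter bb'_b.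
  - by rewrite !count_mem_proj2.
by rewrite -(count_mem_proj2 u bb'_b') proj_uu' count_mem_proj2.
Qed.

Lemma linking_perm_eq (a : Sigma) (t u u' x v v' : seq Sigma) :
  (forall c, c \in x) -> path (dep I) a t -> (forall c, c \in a :: t) ->
  a \notin v -> a \notin v' ->
  trace_eq I (u ++ x ++ v) (u' ++ x ++ v') -> perm_eq u u'.
Proof.
move=> x_full a_t t_full aNv aNv' uxv.
have a_uu' : count_mem a u = count_mem a u'.
  move/permP/(_ (pred1 a))/eqP: (trace_eq_perm uxv).
  by rewrite !count_cat (count_memPn aNv) (count_memPn aNv') !addn0 eqn_add2r => /eqP.
have count_eq : all (fun z => count_mem z u == count_mem z u') (a :: t).
  apply: path_all_closed a_t _ => [b b' bb' /eqP b_uu'|]; last exact/eqP.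
  exact/eqP/(count_eq_along_dep uxv bb' (x_full b) b_uu').
by apply/allP => z _; apply: (allP count_eq z (t_full z)).
Qed.

Lemma trace_eq_cancel_mid (u u' x v v' : seq Sigma) :
  perm_eq u u' -> trace_eq I (u ++ x ++ v) (u' ++ x ++ v') ->
  trace_eq I u u' /\ trace_eq I v v'.
Proof.
move=> uu' uxv.
have proj_eq c d : dep I c d -> proj2 c d u = proj2 c d u' /\ proj2 c d v = proj2 c d v'.
  move=> cd; move: (trace_eq_proj2 uxv cd); rewrite /proj2 !filter_cat => /eqP.
  rewrite eqseq_cat ?size_filter ?(permP uu') // eqseq_cat //.
  by case/and3P => /eqP -> _ /eqP ->.
by split; apply: proj2_trace_eq => c d /proj_eq[].
Qed.

End Projections.

Theorem lemma1 (Sigma : finType) (I : rel Sigma)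
  (I_irr : irreflexive I) (I_sym : symmetric I)
  (X : finType) (act : X -> Sigma -> option X)
  (hact : act_compat I act)
  (a : Sigma) (alpha : X) (x : seq Sigma)
  (hx : rooted_linking_exec I act a alpha x)
  (p q : nat) (beta : X) :
  forall u u' v v' : seq Sigma,
    size u = p -> actw act (Some beta) u = Some alpha ->
    size u' = p -> actw act (Some beta) u' = Some alpha ->
    size v = q -> a \notin v -> actw act (actw act (Some alpha) x) v != None ->
    size v' = q -> a \notin v' -> actw act (actw act (Some alpha) x) v' != None ->
    trace_eq I (u ++ x ++ v) (u' ++ x ++ v') ->
    trace_eq I u u' /\ trace_eq I v v'.
Proof.
move=> u u' v v' _ _ _ _ _ aNv _ _ aNv' _ uxv.
have [w [wx [_ [t [at_w a_t t_full]]]]] := hx.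
have x_full c : c \in x.
  by rewrite -(perm_mem (trace_eq_perm wx)) (mem_subseq at_w).
have uu' := linking_perm_eq I_irr I_sym x_full a_t t_full aNv aNv' uxv.
exact: (trace_eq_cancel_mid I_irr I_sym uu' uxv).
Qed.
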